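(* If $h:[0,\infty)\to[\frac{\beta u_0-1}{r},\frac{\beta u_0}{r}]$ is a decreasing solution to the HJB equation, then $h$ is strictly decreasing.
   Context: Fix $\mu\in\mathbb R$, $\sigma>0$, $u_0>0$, $r>0$, $\beta>0$, $d>0$. The HJB equation is $$-rh(z)-\mu h'(z)+\tfrac{\sigma^2}{2}h''(z)+\sup_{u\in[0,u_0]}\{(\beta+h'(z))u\}=\mathbf 1_{\{z>d\}}.$$ A solution to the HJB equation is a function $h:[0,\infty)\to[\frac{\beta u_0-1}{r},\frac{\beta u_0}{r}]$ that is continuously differentiable on $[0,\infty)$, twice continuously differentiable on $[0,d]$ and on $(d,\infty)$ respectively (with $h'(0),h''(0)$ the right derivatives and $h''(d)$ the left second derivative), and satisfies the HJB equation for all $z\ge0$. *)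

From Stdlib Require Import Reals.
From Coquelicot Require Import Coquelicot.
Open Scope R_scope.

Definition right_deriv (f : R -> R) (x l : R) : Prop :=
  filterlim (fun y => (f y - f x) / (y - x)) (at_right x) (locally l).
Definition left_deriv (f : R -> R) (x l : R) : Prop :=
  filterlim (fun y => (f y - f x) / (y - x)) (at_left x) (locally l).

Definition ind_gt (d z : R) : R := if Rlt_dec d z then 1 else 0.

Definition hjb_sup (u0 beta p : R) : Rbar :=
  Lub_Rbar (fun v => exists u, 0 <= u <= u0 /\ v = (beta + p) * u).

Definition hjb_solution (mu sigma u0 r beta d : R) (h : R -> R) : Prop :=
  exists h1 h2 : R -> R,
    (forall z, 0 <= z -> (beta * u0 - 1) / r <= h z <= beta * u0 / r) /\
    right_deriv h 0 (h1 0) /\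
    (forall z, 0 < z -> is_derive h z (h1 z)) /\
    filterlim h1 (at_right 0) (locally (h1 0)) /\
    (forall z, 0 < z -> continuous h1 z) /\
    right_deriv h1 0 (h2 0) /\
    (forall z, 0 < z < d -> is_derive h1 z (h2 z)) /\
    left_deriv h1 d (h2 d) /\
    filterlim h2 (at_right 0) (locally (h2 0)) /\
    (forall z, 0 < z < d -> continuous h2 z) /\
    filterlim h2 (at_left d) (locally (h2 d)) /\
    (forall z, d < z -> is_derive h1 z (h2 z)) /\
    (forall z, d < z -> continuous h2 z) /\
    (forall z, 0 <= z ->
       Rbar_plus (Finite (- r * h z - mu * h1 z + sigma ^ 2 / 2 * h2 z))
                 (hjb_sup u0 beta (h1 z))
       = Finite (ind_gt d z)).

(* If h were constant on an interval, h' = h'' = 0 there and the HJB equation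
   pins h to one of its bounds: beta u0 / r below d, (beta u0 - 1) / r above d.
   As h is monotone and stays within these bounds, such a value propagates to
   the last (resp. first) point s where h touches the bound before (resp. after)
   d; s is an extremum of h, so h'(s) = 0.  If s <> d, near s the control
   saturates and the distance from h to the bound solves the linear ODE
   w'' = (2r/sigma^2) w + (2(mu - u0)/sigma^2) w' with zero Cauchy data, hence
   vanishes on one more side of s, contradicting the choice of s.  If s = d, the
   HJB equation gives sigma^2/2 h'' = 1 right after d (upper bound), resp.
   sigma^2/2 h''(d-) = -1 (lower bound), so h' > 0 near d: impossible. *)

From Stdlib Require Import Reals Lra.
From Coquelicot Require Import Coquelicot.
Open Scope R_scope.

Lemma hjb_sup_eq (u0 beta p : R) :
  0 <= u0 -> hjb_sup u0 beta p = Finite (u0 * Rmax 0 (beta + p)).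
Proof.
  intros Hu0; apply is_lub_Rbar_unique; split.
  - intros v [u [Hu ->]]; simpl.
    unfold Rmax; destruct (Rle_dec 0 (beta + p)); nra.
  - intros b Hb; unfold Rmax; destruct (Rle_dec 0 (beta + p)).
    + rewrite Rmult_comm; apply Hb; exists u0; split; [lra | reflexivity].
    + rewrite Rmult_0_r, <- (Rmult_0_r (beta + p)).
      apply Hb; exists 0; split; [lra | reflexivity].
Qed.

Lemma ind_gt_le (d z : R) : z <= d -> ind_gt d z = 0.
Proof. intros Hz; unfold ind_gt; destruct (Rlt_dec d z); lra. Qed.

Lemma ind_gt_gt (d z : R) : d < z -> ind_gt d z = 1.
Proof. intros Hz; unfold ind_gt; destruct (Rlt_dec d z); lra. Qed.

Lemma locally_interval_R (x : R) (P : R -> Prop) :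
  locally x P -> exists eps : posreal, forall y, x - eps < y < x + eps -> P y.
Proof.
  intros [eps Heps]; exists eps; intros y Hy; apply Heps.
  exact (proj2 (Rabs_lt_between' _ _ _) Hy).
Qed.

Lemma continuous_pos_near (f : R -> R) (x : R) :
  continuous f x -> 0 < f x ->
  exists eps : posreal, forall y, x - eps < y < x + eps -> 0 < f y.
Proof.
  intros Hc Hpos.
  apply continuity_pt_filterlim in Hc; rewrite continuity_pt_locally in Hc.
  destruct (locally_interval_R _ _ (Hc (mkposreal _ Hpos))) as [eps Heps].
  exists eps; intros y Hy; specialize (Heps y Hy); simpl in Heps.
  apply Rabs_def2 in Heps; lra.
Qed.

Lemma nonincreasing_is_derive_le0 (f : R -> R) (x b l : R) :
  x < b -> (forall y, x <= y < b -> f y <= f x) -> is_derive f x l -> l <= 0.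
Proof.
  intros Hxb Hdec Hd; apply Rnot_lt_le; intros Hl.
  destruct (proj1 (is_derive_Reals _ _ _) Hd l Hl) as [del Hdel].
  set (k := Rmin del (b - x) / 2).
  assert (Hk : 0 < k /\ k < del /\ x + k < b).
  { pose proof (Rmin_l del (b - x)); pose proof (Rmin_r del (b - x)).
    pose proof (Rmin_glb_lt del (b - x) 0 (cond_pos del) ltac:(lra)).
    unfold k; lra. }
  specialize (Hdel k ltac:(lra) ltac:(rewrite Rabs_pos_eq; lra)).
  apply Rabs_def2 in Hdel.
  assert (Hq : f (x + k) - f x = (f (x + k) - f x) / k * k) by (field; lra).
  assert (f (x + k) <= f x) by (apply Hdec; lra).
  nra.
Qed.

Lemma is_derive_local_max (f : R -> R) (a b x l : R) :
  a < x < b -> (forall y, a < y < b -> f y <= f x) -> is_derive f x l -> l = 0.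
Proof.
  intros Hx Hmax Hd.
  pose (pr := exist _ l (proj1 (is_derive_Reals _ _ _) Hd) : derivable_pt f x).
  change l with (derive_pt f x pr).
  apply (deriv_maximum f a b); [tauto | tauto | intros y Hay Hyb; apply Hmax; lra].
Qed.

Lemma is_derive_local_min (f : R -> R) (a b x l : R) :
  a < x < b -> (forall y, a < y < b -> f x <= f y) -> is_derive f x l -> l = 0.
Proof.
  intros Hx Hmin Hd.
  pose (pr := exist _ l (proj1 (is_derive_Reals _ _ _) Hd) : derivable_pt f x).
  change l with (derive_pt f x pr).
  apply (deriv_minimum f a b); [tauto | tauto | intros y Hay Hyb; apply Hmin; lra].
Qed.

(* Unlike [MVT_gen], the intermediate point is strictly inside [a, b]. *)
Lemma mvt_strict (f df : R -> R) (a b : R) :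
  a < b ->
  (forall x, a < x < b -> is_derive f x (df x)) ->
  (forall x, a <= x <= b -> continuous f x) ->
  exists c, a < c < b /\ f b - f a = df c * (b - a).
Proof.
  intros Hab Hd Hc.
  pose (pr x (Hx : a < x < b) :=
          exist _ (df x) (proj1 (is_derive_Reals _ _ _) (Hd x Hx)) : derivable_pt f x).
  destruct (MVT f id a b pr (fun x _ => derivable_pt_id x) Hab) as [c [Hc' Heq]].
  - intros x Hx; apply continuity_pt_filterlim, Hc, Hx.
  - intros x _; apply derivable_continuous_pt, derivable_pt_id.
  - exists c; split; [exact Hc'|].
    rewrite derive_pt_id in Heq; simpl in Heq; unfold id in Heq; lra.
Qed.

Lemma left_deriv_lt0_gt_left (f : R -> R) (x l a : R) :
  left_deriv f x l -> l < 0 -> a < x -> exists y, a < y < x /\ f x < f y.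
Proof.
  intros Hf Hl Hax.
  assert (Hl' : 0 < - l) by lra.
  destruct (locally_interval_R _ _ (proj1 (filterlim_locally _ _) Hf (mkposreal _ Hl')))
    as [eps Heps].
  set (y := x - Rmin eps (x - a) / 2).
  assert (Hy : a < y < x /\ x - eps < y).
  { pose proof (Rmin_l eps (x - a)); pose proof (Rmin_r eps (x - a)).
    pose proof (Rmin_glb_lt eps (x - a) 0 (cond_pos eps) ltac:(lra)).
    unfold y; lra. }
  exists y; split; [tauto|].
  specialize (Heps y ltac:(lra) ltac:(lra)).
  apply (proj1 (Rabs_lt_between' _ _ _)) in Heps; simpl in Heps.
  assert (Hq : f y - f x = (f y - f x) / (y - x) * (y - x)) by (field; lra).
  nra.
Qed.

Lemma last_point_ge (f : R -> R) (c lo hi : R) :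
  lo <= hi -> c <= f lo -> (forall t, lo <= t <= hi -> continuous f t) ->
  exists s, lo <= s <= hi /\ c <= f s /\ forall t, s < t <= hi -> f t < c.
Proof.
  intros Hlh Hlo Hc.
  destruct (completeness (fun t => lo <= t <= hi /\ c <= f t)) as [s [Hub Hlub]].
  - exists hi; intros t Ht; apply Ht.
  - exists lo; split; [lra | exact Hlo].
  - assert (Hlo_s : lo <= s) by (apply Hub; split; [lra | exact Hlo]).
    assert (Hs_hi : s <= hi) by (apply Hlub; intros t Ht; apply Ht).
    exists s; split; [lra|]; split.
    + apply Rnot_lt_le; intros Hlt.
      destruct (continuous_pos_near (fun t => c - f t) s) as [eps Heps].
      { apply (continuous_minus (fun _ => c) f); [apply continuous_const | apply Hc; lra]. }
      { lra. }
      assert (s <= s - eps) by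
        (apply Hlub; intros t [Ht Hft]; apply Rnot_lt_le; intros Hts;
         assert (t <= s) by (apply Hub; split; assumption);
         specialize (Heps t ltac:(lra)); lra).
      pose proof (cond_pos eps); lra.
    + intros t Ht; apply Rnot_le_lt; intros Hft.
      assert (t <= s) by (apply Hub; split; [lra | exact Hft]); lra.
Qed.

Lemma first_point_le (f : R -> R) (c lo hi : R) :
  lo <= hi -> f hi <= c -> (forall t, lo <= t <= hi -> continuous f t) ->
  exists q, lo <= q <= hi /\ f q <= c /\ forall t, lo <= t < q -> c < f t.
Proof.
  intros Hlh Hhi Hc.
  destruct (last_point_ge (fun t => - f (- t)) (- c) (- hi) (- lo))
    as [s [Hs [Hfs Hafter]]].
  - lra.
  - rewrite Ropp_involutive; lra.
  - intros t Ht; apply (continuous_opp (fun t => f (- t))), (continuous_comp (fun t => - t) f).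
    + exact (continuous_opp (fun y => y) t (continuous_id t)).
    + apply Hc; lra.
  - exists (- s); split; [lra|]; split; [lra|].
    intros t Ht; specialize (Hafter (- t) ltac:(lra)).
    rewrite Ropp_involutive in Hafter; lra.
Qed.

Lemma ode_integrating_factor (a b s t : R) (w w1 w2 : R -> R) :
  s < t -> w1 s = 0 -> continuous w1 s ->
  (forall x, s < x <= t -> is_derive w1 x (w2 x)) ->
  (forall x, s < x < t -> w2 x = a * w x + b * w1 x) ->
  exists c, s < c < t /\ w1 t = a * w c * (t - s) * exp (b * (t - c)).
Proof.
  intros Hst Hw1s Hcs Hd Hode.
  assert (Hexp : forall x, is_derive (fun y => exp (- b * y)) x (- b * exp (- b * x))).
  { intros x; auto_derive; [exact I | ring]. }
  assert (Hdprod : forall x, s < x <= t -> is_derive (fun y => w1 y * exp (- b * y)) x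
                     (w2 x * exp (- b * x) + w1 x * (- b * exp (- b * x)))).
  { intros x Hx; apply (is_derive_mult w1 (fun y => exp (- b * y)));
      [apply Hd, Hx | apply Hexp | intros; apply Rmult_comm]. }
  destruct (mvt_strict (fun x => w1 x * exp (- b * x)) (fun x => a * w x * exp (- b * x)) s t Hst)
    as [c [Hc Heq]].
  - intros x Hx.
    replace (a * w x * exp (- b * x))
      with (w2 x * exp (- b * x) + w1 x * (- b * exp (- b * x))) by (rewrite Hode by lra; ring).
    apply Hdprod; lra.
  - intros x Hx; destruct (Req_dec x s) as [->|Hxs].
    + apply (continuous_mult w1 (fun y => exp (- b * y))); [exact Hcs|].
      apply (ex_derive_continuous (V := R_NormedModule)); eexists; apply Hexp.
    + apply (ex_derive_continuous (V := R_NormedModule)); eexists; apply Hdprod; lra.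
  - exists c; split; [exact Hc|].
    assert (Hinv : exp (- b * t) * exp (b * t) = 1)
      by (rewrite <- exp_plus, <- exp_0; f_equal; ring).
    assert (Hsplit : exp (b * (t - c)) = exp (- b * c) * exp (b * t))
      by (rewrite <- exp_plus; f_equal; ring).
    rewrite Hw1s in Heq; rewrite Hsplit.
    transitivity (w1 t * exp (- b * t) * exp (b * t)); [rewrite Rmult_assoc, Hinv; ring|].
    replace (w1 t * exp (- b * t)) with (a * w c * exp (- b * c) * (t - s)) by lra; ring.
Qed.

Lemma is_derive_const_sub (f : R -> R) (c x l : R) :
  is_derive f x l -> is_derive (fun t => c - f t) x (- l).
Proof.
  intros Hf; replace (- l) with (0 - l) by ring.
  exact (is_derive_minus (fun _ => c) f x 0 l (is_derive_const c x) Hf).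
Qed.

Lemma is_derive_sub_const (f : R -> R) (c x l : R) :
  is_derive f x l -> is_derive (fun t => f t - c) x l.
Proof.
  intros Hf; replace l with (l - 0) by ring.
  exact (is_derive_minus f (fun _ => c) x l 0 Hf (is_derive_const c x)).
Qed.

Lemma is_derive_reflect (f : R -> R) (x l : R) :
  is_derive f (- x) l -> is_derive (fun t => f (- t)) x (- l).
Proof.
  intros Hf.
  assert (Hopp : is_derive (fun t : R => - t) x (-1)) by (auto_derive; [exact I | ring]).
  replace (- l) with (scal (-1) l) by (unfold scal; simpl; unfold mult; simpl; ring).
  exact (is_derive_comp f (fun t => - t) x l (-1) Hf Hopp).
Qed.

Lemma exp_mult_le_exp_abs (b y : R) : 0 <= y <= 1 -> exp (b * y) <= exp (Rabs b).
Proof.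
  intros Hy.
  assert (Hby : b * y <= Rabs b) by (pose proof (Rle_abs b); pose proof (Rabs_pos b); nra).
  destruct (Rle_lt_or_eq_dec _ _ Hby) as [Hlt | ->]; [left; apply exp_increasing, Hlt | lra].
Qed.

Lemma ode_derivative_bound (a b s del : R) (w w1 w2 : R -> R) :
  0 <= a -> 0 < del <= 1 -> w s = 0 -> w1 s = 0 -> continuous w1 s ->
  (forall t, s < t <= s + del -> is_derive w1 t (w2 t)) ->
  (forall t, s < t <= s + del -> w2 t = a * w t + b * w1 t) ->
  (forall t u, s <= t <= u -> u <= s + del -> w t <= w u) ->
  forall t, s < t <= s + del -> w1 t <= a * w (s + del) * exp (Rabs b) * del.
Proof.
  intros Ha Hdel Hws Hw1s Hcw1 Hdw1 Hode Hmono t Ht.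
  destruct (ode_integrating_factor a b s t w w1 w2) as [c [Hc ->]];
    [lra | exact Hw1s | exact Hcw1 | intros x Hx; apply Hdw1; lra
    | intros x Hx; apply Hode; lra |].
  assert (Hwc : 0 <= w c <= w (s + del)) by (split; [rewrite <- Hws|]; apply Hmono; lra).
  pose proof (exp_pos (b * (t - c))).
  pose proof (exp_mult_le_exp_abs b (t - c) ltac:(lra)).
  apply Rle_trans with (a * w (s + del) * (t - s) * exp (Rabs b)).
  - apply Rmult_le_compat; [| lra | | lra].
    + apply Rmult_le_pos; [apply Rmult_le_pos|]; lra.
    + apply Rmult_le_compat_r; [lra|]; apply Rmult_le_compat_l; lra.
  - replace (a * w (s + del) * exp (Rabs b) * del)
      with (a * w (s + del) * del * exp (Rabs b)) by ring.
    apply Rmult_le_compat_r; [lra|].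
    apply Rmult_le_compat_l; [apply Rmult_le_pos|]; lra.
Qed.

(* If w were positive at s + del, the bound on w1 would force
   w (s + del) <= a e^|b| del^2 w (s + del). *)
Lemma ode_zero_start (a b s e : R) (w w1 w2 : R -> R) :
  0 <= a -> s < e -> w s = 0 -> w1 s = 0 -> continuous w s -> continuous w1 s ->
  (forall t, s < t < e -> is_derive w t (w1 t)) ->
  (forall t, s < t < e -> is_derive w1 t (w2 t)) ->
  (forall t, s < t < e -> w2 t = a * w t + b * w1 t) ->
  (forall t u, s <= t <= u -> u < e -> w t <= w u) ->
  exists z, s < z < e /\ w z = 0.
Proof.
  intros Ha Hse Hws Hw1s Hcw Hcw1 Hdw Hdw1 Hode Hmono.
  set (X := exp (Rabs b)).
  assert (HX : 1 <= X) by (pose proof (exp_ineq1_le (Rabs b)); pose proof (Rabs_pos b);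
                           unfold X; lra).
  set (del := Rmin 1 (Rmin ((e - s) / 2) (1 / (a * X + 1)))).
  assert (Hdel : 0 < del <= 1 /\ del <= (e - s) / 2 /\ a * X * del < 1).
  { assert (HaX : 0 <= a * X) by nra.
    assert (Hinv : 0 < 1 / (a * X + 1)) by (apply Rdiv_lt_0_compat; lra).
    assert (del <= 1) by apply Rmin_l.
    assert (del <= (e - s) / 2) by (eapply Rle_trans; [apply Rmin_r | apply Rmin_l]).
    assert (del <= 1 / (a * X + 1)) by (eapply Rle_trans; [apply Rmin_r | apply Rmin_r]).
    assert (0 < del) by (apply Rmin_glb_lt; [lra | apply Rmin_glb_lt; lra]).
    assert (a * X * del <= a * X * (1 / (a * X + 1))) by (apply Rmult_le_compat_l; lra).
    assert (a * X * (1 / (a * X + 1)) < 1)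
      by (apply (Rmult_lt_reg_r (a * X + 1)); [lra|];
          unfold Rdiv; rewrite Rmult_1_l, Rmult_assoc, Rinv_l by lra; lra).
    lra. }
  exists (s + del); split; [lra|].
  assert (HM : 0 <= w (s + del)) by (rewrite <- Hws; apply Hmono; lra).
  destruct (mvt_strict w w1 s (s + del)) as [c [Hc Heq]];
    [lra | intros t Ht; apply Hdw; lra | |].
  { intros t Ht; destruct (Req_dec t s) as [->|Hts]; [exact Hcw|].
    apply (ex_derive_continuous (V := R_NormedModule)); eexists; apply Hdw; lra. }
  pose proof (ode_derivative_bound a b s del w w1 w2 Ha (proj1 Hdel) Hws Hw1s Hcw1
                (fun t Ht => Hdw1 t ltac:(lra)) (fun t Ht => Hode t ltac:(lra))
                (fun t u Htu Hu => Hmono t u Htu ltac:(lra)) c ltac:(lra)) as Hw1c.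
  fold X in Hw1c; rewrite Hws in Heq; replace (s + del - s) with del in Heq by ring.
  assert (w (s + del) <= a * X * del * del * w (s + del)) by nra.
  assert (a * X * del * del < 1) by nra.
  nra.
Qed.

Lemma ode_zero_end (a b s e : R) (w w1 w2 : R -> R) :
  0 <= a -> e < s -> w s = 0 -> w1 s = 0 -> continuous w s -> continuous w1 s ->
  (forall t, e < t < s -> is_derive w t (w1 t)) ->
  (forall t, e < t < s -> is_derive w1 t (w2 t)) ->
  (forall t, e < t < s -> w2 t = a * w t + b * w1 t) ->
  (forall t u, e < t <= u -> u <= s -> w u <= w t) ->
  exists z, e < z < s /\ w z = 0.
Proof.
  intros Ha Hes Hws Hw1s Hcw Hcw1 Hdw Hdw1 Hode Hmono.
  assert (Hcont : forall g : R -> R, continuous g s -> continuous (fun t => g (- t)) (- s)).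
  { intros g Hg; apply (continuous_comp (fun t => - t) g);
      [exact (continuous_opp (fun y => y) _ (continuous_id _)) | now rewrite Ropp_involutive]. }
  destruct (ode_zero_start a (- b) (- s) (- e) (fun t => w (- t)) (fun t => - w1 (- t))
              (fun t => w2 (- t))) as [z [Hz Hwz]].
  - exact Ha.
  - lra.
  - now rewrite Ropp_involutive.
  - now rewrite Ropp_involutive, Hw1s, Ropp_0.
  - now apply Hcont.
  - apply (continuous_opp (fun t => w1 (- t))); now apply Hcont.
  - intros t Ht; apply is_derive_reflect; apply Hdw; lra.
  - intros t Ht.
    replace (w2 (- t)) with (- - w2 (- t)) by ring.
    apply (is_derive_reflect (fun y => - w1 y)).
    apply (is_derive_opp w1); apply Hdw1; lra.
  - intros t Ht; rewrite Hode by lra; ring.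
  - intros t u Ht Hu; apply Hmono; lra.
  - exists (- z); split; [lra | exact Hwz].
Qed.

Section DecreasingSolution.

Variables (mu sigma u0 r beta d : R) (h h1 h2 : R -> R).

Hypothesis sigma_gt0 : 0 < sigma.
Hypothesis u0_ge0 : 0 <= u0.
Hypothesis r_gt0 : 0 < r.
Hypothesis beta_gt0 : 0 < beta.
Hypothesis d_gt0 : 0 < d.
Hypothesis h_bounds : forall z, 0 <= z -> (beta * u0 - 1) / r <= h z <= beta * u0 / r.
Hypothesis h_derive : forall z, 0 < z -> is_derive h z (h1 z).
Hypothesis h1_continuous : forall z, 0 < z -> continuous h1 z.
Hypothesis h1_derive_below : forall z, 0 < z < d -> is_derive h1 z (h2 z).
Hypothesis h1_left_deriv_d : left_deriv h1 d (h2 d).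
Hypothesis h1_derive_above : forall z, d < z -> is_derive h1 z (h2 z).
Hypothesis hjb : forall z, 0 <= z ->
  Rbar_plus (Finite (- r * h z - mu * h1 z + sigma ^ 2 / 2 * h2 z)) (hjb_sup u0 beta (h1 z))
  = Finite (ind_gt d z).
Hypothesis h_nonincreasing : forall x y, 0 <= x -> x <= y -> h y <= h x.

Lemma h_continuous (z : R) : 0 < z -> continuous h z.
Proof.
  intros Hz; apply (ex_derive_continuous (V := R_NormedModule)).
  exists (h1 z); apply h_derive, Hz.
Qed.

Lemma h1_nonpos (z : R) : 0 < z -> h1 z <= 0.
Proof.
  intros Hz; apply (nonincreasing_is_derive_le0 h z (z + 1)); [lra | | apply h_derive, Hz].
  intros y Hy; apply h_nonincreasing; lra.
Qed.

Lemma h2_hjb (z : R) : 0 <= z -> 0 <= beta + h1 z ->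
  sigma ^ 2 / 2 * h2 z = r * h z + (mu - u0) * h1 z - beta * u0 + ind_gt d z.
Proof.
  intros Hz Hp; pose proof (hjb z Hz) as E.
  rewrite hjb_sup_eq, Rmax_right in E by assumption.
  simpl in E; injection E; lra.
Qed.

Lemma sigma2_gt0 : 0 < sigma ^ 2 / 2.
Proof. apply Rdiv_lt_0_compat; [apply pow_lt|]; lra. Qed.

Lemma h1_eq0_at_upper (p : R) : 0 < p -> h p = beta * u0 / r -> h1 p = 0.
Proof.
  intros Hp Hhp; apply (is_derive_local_max h 0 (p + 1) p); [lra | | apply h_derive, Hp].
  intros y Hy; rewrite Hhp; apply h_bounds; lra.
Qed.

Lemma h1_eq0_at_lower (p : R) : 0 < p -> h p = (beta * u0 - 1) / r -> h1 p = 0.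
Proof.
  intros Hp Hhp; apply (is_derive_local_min h 0 (p + 1) p); [lra | | apply h_derive, Hp].
  intros y Hy; rewrite Hhp; apply h_bounds; lra.
Qed.

Lemma control_saturated_near (p : R) : 0 < p -> h1 p = 0 ->
  exists eps : posreal, forall t, p - eps < t < p + eps -> 0 < beta + h1 t.
Proof.
  intros Hp Hh1p; apply continuous_pos_near; cbv beta; [|lra].
  apply (continuous_plus (fun _ => beta) h1); [apply continuous_const | apply h1_continuous, Hp].
Qed.

Lemma upper_level_spreads (s : R) : 0 < s < d -> h s = beta * u0 / r ->
  exists t, s < t < d /\ h t = beta * u0 / r.
Proof.
  intros Hs Hhs.
  assert (Hh1s : h1 s = 0) by (apply h1_eq0_at_upper; [lra | exact Hhs]).
  destruct (control_saturated_near s ltac:(lra) Hh1s) as [eps Heps].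
  set (e := Rmin d (s + eps)).
  assert (He : s < e <= d /\ e <= s + eps).
  { pose proof (cond_pos eps); split; [split|]; [apply Rmin_glb_lt; lra | apply Rmin_l | apply Rmin_r]. }
  pose proof sigma2_gt0.
  destruct (ode_zero_start (2 * r / sigma ^ 2) (2 * (mu - u0) / sigma ^ 2) s e
              (fun t => beta * u0 / r - h t) (fun t => - h1 t) (fun t => - h2 t))
    as [z [Hz Hwz]]; cbv beta.
  - apply Rlt_le, Rdiv_lt_0_compat; [lra | apply pow_lt; lra].
  - lra.
  - rewrite Hhs; ring.
  - rewrite Hh1s; ring.
  - apply (continuous_minus (fun _ => beta * u0 / r) h);
      [apply continuous_const | apply h_continuous; lra].
  - apply (continuous_opp h1), h1_continuous; lra.
  - intros t Ht; apply is_derive_const_sub, h_derive; lra.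
  - intros t Ht; apply (is_derive_opp h1), h1_derive_below; lra.
  - intros t Ht.
    pose proof (h2_hjb t ltac:(lra) (Rlt_le _ _ (Heps t ltac:(lra)))) as E.
    rewrite ind_gt_le in E by lra.
    apply (Rmult_eq_reg_l (sigma ^ 2 / 2)); [|lra].
    rewrite Ropp_mult_distr_r_reverse, E; field.
    repeat split; lra.
  - intros t u Ht Hu; apply Rplus_le_compat_l, Ropp_le_contravar, h_nonincreasing; lra.
  - exists z; split; lra.
Qed.

Lemma lower_level_spreads (q : R) : d < q -> h q = (beta * u0 - 1) / r ->
  exists t, d < t < q /\ h t = (beta * u0 - 1) / r.
Proof.
  intros Hq Hhq.
  assert (Hh1q : h1 q = 0) by (apply h1_eq0_at_lower; [lra | exact Hhq]).
  destruct (control_saturated_near q ltac:(lra) Hh1q) as [eps Heps].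
  set (e := Rmax d (q - eps)).
  assert (He : d <= e < q /\ q - eps <= e).
  { pose proof (cond_pos eps); split; [split|]; [apply Rmax_l | apply Rmax_lub_lt; lra | apply Rmax_r]. }
  pose proof sigma2_gt0.
  destruct (ode_zero_end (2 * r / sigma ^ 2) (2 * (mu - u0) / sigma ^ 2) q e
              (fun t => h t - (beta * u0 - 1) / r) h1 h2) as [z [Hz Hwz]]; cbv beta.
  - apply Rlt_le, Rdiv_lt_0_compat; [lra | apply pow_lt; lra].
  - lra.
  - rewrite Hhq; ring.
  - exact Hh1q.
  - apply (continuous_minus h (fun _ => (beta * u0 - 1) / r));
      [apply h_continuous; lra | apply continuous_const].
  - apply h1_continuous; lra.
  - intros t Ht; apply is_derive_sub_const, h_derive; lra.
  - intros t Ht; apply h1_derive_above; lra.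
  - intros t Ht.
    pose proof (h2_hjb t ltac:(lra) (Rlt_le _ _ (Heps t ltac:(lra)))) as E.
    rewrite ind_gt_gt in E by lra.
    apply (Rmult_eq_reg_l (sigma ^ 2 / 2)); [|lra].
    rewrite E; field; repeat split; lra.
  - intros t u Ht Hu; apply Rplus_le_compat_r, h_nonincreasing; lra.
  - exists z; split; lra.
Qed.

Lemma h_ne_upper_at_d : h d <> beta * u0 / r.
Proof.
  intros Hhd.
  assert (Hh1d : h1 d = 0) by (apply h1_eq0_at_upper; [lra | exact Hhd]).
  destruct (control_saturated_near d d_gt0 Hh1d) as [eps1 Heps1].
  (* right of d this is sigma^2/2 h2 (HJB equation), and it equals 1 at d *)
  destruct (continuous_pos_near (fun t => r * h t + (mu - u0) * h1 t + (1 - beta * u0)) d)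
    as [eps2 Heps2].
  { apply (continuous_plus (fun t => r * h t + (mu - u0) * h1 t) (fun _ => 1 - beta * u0));
      [| apply continuous_const].
    apply (continuous_plus (fun t => r * h t) (fun t => (mu - u0) * h1 t)).
    - apply (continuous_scal_r r h), h_continuous; lra.
    - apply (continuous_scal_r (mu - u0) h1), h1_continuous; lra. }
  { cbv beta; rewrite Hhd, Hh1d; field_simplify; lra. }
  set (z := d + Rmin eps1 eps2 / 2).
  assert (Hz : d < z /\ z < d + eps1 /\ z < d + eps2).
  { pose proof (Rmin_l eps1 eps2); pose proof (Rmin_r eps1 eps2).
    pose proof (Rmin_glb_lt eps1 eps2 0 (cond_pos eps1) (cond_pos eps2)).
    unfold z; lra. }
  destruct (mvt_strict h1 h2 d z) as [c [Hc Heq]]; [lra | intros t Ht; apply h1_derive_above; lra | |].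
  { intros t Ht; apply h1_continuous; lra. }
  pose proof (h2_hjb c ltac:(lra) (Rlt_le _ _ (Heps1 c ltac:(lra)))) as E.
  rewrite ind_gt_gt in E by lra.
  specialize (Heps2 c ltac:(lra)).
  pose proof sigma2_gt0.
  assert (0 < h2 c) by nra.
  pose proof (h1_nonpos z ltac:(lra)).
  nra.
Qed.

Lemma h_ne_lower_at_d : h d <> (beta * u0 - 1) / r.
Proof.
  intros Hhd.
  assert (Hh1d : h1 d = 0) by (apply h1_eq0_at_lower; [lra | exact Hhd]).
  pose proof (h2_hjb d ltac:(lra) ltac:(lra)) as E.
  rewrite ind_gt_le, Hhd, Hh1d in E by lra.
  assert (Hh2d : h2 d < 0).
  { pose proof sigma2_gt0.
    assert (sigma ^ 2 / 2 * h2 d = -1) by (rewrite E; field; lra).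
    nra. }
  destruct (left_deriv_lt0_gt_left h1 d (h2 d) 0 h1_left_deriv_d Hh2d d_gt0) as [y [Hy Hh1y]].
  pose proof (h1_nonpos y ltac:(lra)); lra.
Qed.

Lemma h_lt_upper (z : R) : 0 < z < d -> h z < beta * u0 / r.
Proof.
  intros Hz; apply Rnot_le_lt; intros Hge.
  destruct (last_point_ge h (beta * u0 / r) z d) as [s [Hs [Hhs Hafter]]];
    [lra | exact Hge | intros t Ht; apply h_continuous; lra |].
  assert (Hhs' : h s = beta * u0 / r) by (pose proof (h_bounds s ltac:(lra)); lra).
  destruct (Req_dec s d) as [->|Hsd]; [exact (h_ne_upper_at_d Hhs')|].
  destruct (upper_level_spreads s) as [t [Ht Hht]]; [lra | exact Hhs' |].
  specialize (Hafter t ltac:(lra)); lra.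
Qed.

Lemma h_gt_lower (z : R) : d < z -> (beta * u0 - 1) / r < h z.
Proof.
  intros Hz; apply Rnot_le_lt; intros Hle.
  destruct (first_point_le h ((beta * u0 - 1) / r) d z) as [q [Hq [Hhq Hbefore]]];
    [lra | exact Hle | intros t Ht; apply h_continuous; lra |].
  assert (Hhq' : h q = (beta * u0 - 1) / r) by (pose proof (h_bounds q ltac:(lra)); lra).
  destruct (Req_dec q d) as [->|Hqd]; [exact (h_ne_lower_at_d Hhq')|].
  destruct (lower_level_spreads q) as [t [Ht Hht]]; [lra | exact Hhq' |].
  specialize (Hbefore t ltac:(lra)); lra.
Qed.

Lemma h_flat_level (x y t c : R) : 0 <= x -> x < t < y -> t <> d ->
  (forall u, x < u < y -> h u = c) -> r * c = beta * u0 - ind_gt d t.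
Proof.
  intros Hx Ht Htd Hflat.
  assert (Hh1 : forall u, x < u < y -> h1 u = 0).
  { intros u Hu; apply (is_derive_local_max h x y u); [lra | | apply h_derive; lra].
    intros v Hv; rewrite (Hflat v), (Hflat u) by lra; lra. }
  assert (Hh2 : h2 t = 0).
  { apply (is_derive_local_max h1 x y t); [lra | |].
    - intros v Hv; rewrite (Hh1 v), (Hh1 t) by lra; lra.
    - destruct (Rlt_le_dec t d); [apply h1_derive_below | apply h1_derive_above]; lra. }
  pose proof (h2_hjb t ltac:(lra) ltac:(rewrite Hh1 by lra; lra)) as E.
  rewrite Hh2, Hh1, Hflat in E by lra; lra.
Qed.

Lemma h_decreasing (x y : R) : 0 <= x -> x < y -> h y < h x.
Proof.
  intros Hx Hxy; apply Rnot_le_lt; intros Hge.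
  assert (Hflat : forall u, x < u < y -> h u = h x).
  { intros u Hu; apply Rle_antisym; [apply h_nonincreasing; lra|].
    apply Rle_trans with (h y); [exact Hge | apply h_nonincreasing; lra]. }
  assert (Ht : exists t, x < t < y /\ t <> d).
  { destruct (Req_dec ((x + y) / 2) d).
    - exists ((x + 3 * y) / 4); split; lra.
    - exists ((x + y) / 2); split; lra. }
  destruct Ht as [t [Ht Htd]].
  pose proof (h_flat_level x y t (h x) Hx Ht Htd Hflat) as Hlevel.
  rewrite <- (Hflat t Ht) in Hlevel.
  destruct (Rlt_le_dec t d).
  - rewrite ind_gt_le in Hlevel by lra.
    pose proof (h_lt_upper t ltac:(lra)) as Hlt.
    apply (Rmult_lt_compat_l r) in Hlt; [|lra].
    replace (r * (beta * u0 / r)) with (beta * u0) in Hlt by (field; lra); lra.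
  - rewrite ind_gt_gt in Hlevel by lra.
    pose proof (h_gt_lower t ltac:(lra)) as Hgt.
    apply (Rmult_lt_compat_l r) in Hgt; [|lra].
    replace (r * ((beta * u0 - 1) / r)) with (beta * u0 - 1) in Hgt by (field; lra); lra.
Qed.

End DecreasingSolution.

Theorem lemma2p1 (mu sigma u0 r beta d : R) (h : R -> R) :
  0 < sigma -> 0 < u0 -> 0 < r -> 0 < beta -> 0 < d ->
  hjb_solution mu sigma u0 r beta d h ->
  (forall x y, 0 <= x -> x <= y -> h y <= h x) ->
  forall x y, 0 <= x -> x < y -> h y < h x.
Proof.
  intros Hsigma Hu0 Hr Hbeta Hd
    [h1 [h2 [Hbounds [_ [Dh [_ [Ch1 [_ [Dh1_below [Ld1 [_ [_ [_ [Dh1_above [_ Hhjb]]]]]]]]]]]]]]]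
    Hdec.
  apply (h_decreasing mu sigma u0 r beta d h h1 h2); try assumption; lra.
Qed.
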